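(* If a state over time function $\star$ satisfies axiom (E), then it is state-linear, i.e. linear in its second argument.
   Context: Systems are finite-dimensional Hilbert spaces; $\mathfrak{B}(A)$ linear operators, $\mathfrak{S}(A)$ density operators, $\mathfrak{C}(A,B)$ quantum channels (CPTP maps $\mathfrak{B}(A)\to\mathfrak{B}(B)$). A state over time function assigns to all systems $A,B$ a map $\star:\mathfrak{C}(A,B)\times\mathfrak{S}(A)\to\mathfrak{B}(A\otimes B)$, $(\mathcal{E},\rho)\mapsto\mathcal{E}_{B|A}\star\rho_A$, with $\mathrm{Tr}_A[\mathcal{E}\star\rho]=\mathcal{E}(\rho)$ and $\mathrm{Tr}_B[\mathcal{E}\star\rho]=\rho$, extended homogeneously by $(\lambda\mathcal{E})\star\rho=\mathcal{E}\star(\lambda\rho)=\lambda(\mathcal{E}\star\rho)$, $\lambda\in\mathbb{C}$. It is state-linear if it is linear in the second argument. A quantum state over spacetime on $A\otimes E$ is either a density operator on $A\otimes E$ or an operator of the form $\mathcal{F}\star\sigma$. Axiom (E): for all systems $A,B,E$, every quantum state over spacetime $\rho_{AE}$ and every channel $\mathcal{E}_{B|A}$, an operator $\mathcal{E}_{B|A}\star\rho_{AE}$ on $A\otimes B\otimes E$ is defined such that for every completely positive trace-non-increasing map $\mathcal{I}_E$ on $E$, $\mathcal{I}_E[\mathcal{E}_{B|A}\star\rho_{AE}]=\mathcal{E}_{B|A}\star\mathcal{I}_E(\rho_{AE})$, and $\mathrm{Tr}_A[\mathcal{E}_{B|A}\star\rho_{AE}]=(\mathcal{E}_{B|A}\otimes\mathrm{id}_E)(\rho_{AE})$.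 *)

From HB Require Import structures.
From mathcomp Require Import all_boot all_order all_algebra.
From mathcomp Require Import complex mxtens.
From mathcomp Require Import reals.

Set Implicit Arguments.
Unset Strict Implicit.
Unset Printing Implicit Defensive.

Import Order.TTheory GRing.Theory Num.Theory.
Local Open Scope ring_scope.

Section QInfo.
Variable C : numClosedFieldType.

(* A system is a finite-dimensional Hilbert space C^n, represented by n;
   the composite system A (x) B is C^(n*m), with the index (i,j) of the
   tensor product encoded by mxtens_index (Kronecker convention). *)

Definition adjmx {n m : nat} (A : 'M[C]_(n, m)) : 'M[C]_(m, n) :=
  \matrix_(i, j) (A j i)^*.

Definition psd {n : nat} (A : 'M[C]_n) : Prop :=
  adjmx A = A /\ forall v : 'cV[C]_n, 0 <= (adjmx v *m A *m v) 0 0.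

Definition density {n : nat} (rho : 'M[C]_n) : Prop := psd rho /\ \tr rho = 1.

Definition is_linear {n m : nat} (f : 'M[C]_n -> 'M[C]_m) : Prop :=
  forall (a : C) (u v : 'M[C]_n), f (a *: u + v) = a *: f u + f v.

(* id_k (x) f acting on B(C^k (x) C^n) *)
Definition idtens {k n m : nat} (f : 'M[C]_n -> 'M[C]_m) (X : 'M[C]_(k * n))
  : 'M[C]_(k * m) :=
  \matrix_(ij, kl)
    f (\matrix_(a, b) X (mxtens_index ((mxtens_unindex ij).1, a))
                        (mxtens_index ((mxtens_unindex kl).1, b)))
      (mxtens_unindex ij).2 (mxtens_unindex kl).2.

(* f (x) id_k acting on B(C^n (x) C^k) *)
Definition tensid {n m k : nat} (f : 'M[C]_n -> 'M[C]_m) (X : 'M[C]_(n * k))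
  : 'M[C]_(m * k) :=
  \matrix_(ij, kl)
    f (\matrix_(a, b) X (mxtens_index (a, (mxtens_unindex ij).2))
                        (mxtens_index (b, (mxtens_unindex kl).2)))
      (mxtens_unindex ij).1 (mxtens_unindex kl).1.

Definition completely_positive {n m : nat} (f : 'M[C]_n -> 'M[C]_m) : Prop :=
  forall (k : nat) (X : 'M[C]_(k * n)), psd X -> psd (idtens f X).

Definition channel {n m : nat} (f : 'M[C]_n -> 'M[C]_m) : Prop :=
  [/\ is_linear f, completely_positive f & forall X, \tr (f X) = \tr X].

Definition cp_tni {n m : nat} (f : 'M[C]_n -> 'M[C]_m) : Prop :=
  [/\ is_linear f, completely_positive f &
      forall X, psd X -> \tr (f X) <= \tr X].

Definition ptrace1 {n m : nat} (X : 'M[C]_(n * m)) : 'M[C]_m :=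
  \matrix_(j, l) \sum_(i < n) X (mxtens_index (i, j)) (mxtens_index (i, l)).
Definition ptrace2 {n m : nat} (X : 'M[C]_(n * m)) : 'M[C]_n :=
  \matrix_(i, k) \sum_(j < m) X (mxtens_index (i, j)) (mxtens_index (k, j)).

(* trace over the first factor A of B(A (x) B (x) E) = B(C^((n*m)*k)) *)
Definition ptrace1_3 {n m k : nat} (X : 'M[C]_((n * m) * k)) : 'M[C]_(m * k) :=
  \matrix_(jl, jl')
    \sum_(i < n)
      X (mxtens_index (mxtens_index (i, (mxtens_unindex jl).1), (mxtens_unindex jl).2))
        (mxtens_index (mxtens_index (i, (mxtens_unindex jl').1), (mxtens_unindex jl').2)).

(* A (state over time) candidate: for all systems A = C^n, B = C^m, a map
   (E, rho) |-> E \star rho in B(A (x) B).  Only its values on channels and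
   density operators matter. *)
Definition star_type : Type :=
  forall n m : nat, ('M[C]_n -> 'M[C]_m) -> 'M[C]_n -> 'M[C]_(n * m).

Definition state_over_time_function (star : star_type) : Prop :=
  forall (n m : nat) (E : 'M[C]_n -> 'M[C]_m) (rho : 'M[C]_n),
    channel E -> density rho ->
    ptrace1 (star n m E rho) = E rho /\ ptrace2 (star n m E rho) = rho.

Definition spacetime_state (star : star_type) {n k : nat} (rho : 'M[C]_(n * k))
  : Prop :=
  density rho \/
  exists (F : 'M[C]_n -> 'M[C]_k) (sigma : 'M[C]_n),
    [/\ channel F, density sigma & rho = star n k F sigma].

Definition to_triv {n : nat} (X : 'M[C]_n) : 'M[C]_(n * 1) :=
  castmx (esym (muln1 n), esym (muln1 n)) X.

(* Axiom (E): the state over time function extends to an operation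
   ext n m k E rho_AE in B(A (x) B (x) E) on quantum states over spacetime
   rho_AE on A (x) E (extended homogeneously), which agrees with \star when E
   is the trivial system, commutes with every CP trace-non-increasing map on E,
   and has the correct marginal after tracing out A. *)
Definition axiom_E (star : star_type) : Prop :=
  exists ext : forall n m k : nat,
      ('M[C]_n -> 'M[C]_m) -> 'M[C]_(n * k) -> 'M[C]_((n * m) * k),
    forall (n m : nat) (E : 'M[C]_n -> 'M[C]_m), channel E ->
      [/\
          forall rho : 'M[C]_n, density rho ->
            ext n m 1%N E (to_triv rho) = to_triv (star n m E rho),
          forall (k : nat) (rho : 'M[C]_(n * k)) (a : C),
            spacetime_state star rho ->
            ext n m k E (a *: rho) = a *: ext n m k E rho,
          forall (k k' : nat) (rho : 'M[C]_(n * k)) (I : 'M[C]_k -> 'M[C]_k'),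
            spacetime_state star rho -> cp_tni I ->
            idtens I (ext n m k E rho) = ext n m k' E (idtens I rho)
        &
          forall (k : nat) (rho : 'M[C]_(n * k)),
            spacetime_state star rho ->
            ptrace1_3 (ext n m k E rho) = tensid E rho].

Definition state_linear (star : star_type) : Prop :=
  forall (n m : nat) (E : 'M[C]_n -> 'M[C]_m), channel E ->
    exists L : 'M[C]_n -> 'M[C]_(n * m),
      is_linear L /\ forall rho : 'M[C]_n, density rho -> L rho = star n m E rho.

End QInfo.

From mathcomp Require Import all_boot all_order all_algebra.
From mathcomp Require Import complex mxtens reals.
From mathcomp Require Import sesquilinear spectral.

Set Implicit Arguments.
Unset Strict Implicit.
Unset Printing Implicit Defensive.
Import Order.TTheory GRing.Theory Num.Theory.
Local Open Scope ring_scope.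
Local Open Scope sesquilinear_scope.

(* Only axiom (E) is used, with the system E taken to be a copy A' of A.  Let
   Y := E \star Phi for the maximally entangled state Phi on A (x) A'.  For a
   density operator s, the functional X |-> tr (s^T X) on A' is completely
   positive and trace non-increasing (its Kraus operators come from the
   spectral decomposition of s^T), and applied to the A' half of Phi it leaves
   s / n on A.  Commuting it past the extension and using homogeneity gives
   E \star s = n (id (x) tr (s^T .)) (Y), which is linear in s. *)

Lemma big_mxtens (V : nmodType) m n (F : 'I_(m * n) -> V) :
  \sum_x F x = \sum_(i < m) \sum_(j < n) F (mxtens_index (i, j)).
Proof.
rewrite pair_big /= (reindex (@mxtens_index m n)) /=.
  by apply: eq_bigr => -[].
by exists (@mxtens_unindex m n) => x _;
  rewrite (mxtens_indexK, mxtens_unindexK).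
Qed.

Lemma sumr_delta (R : pzSemiRingType) n (p : 'I_n) (F : 'I_n -> R) :
  \sum_(i < n) (i == p)%:R * F i = F p.
Proof.
under eq_bigr => i _ do rewrite mulr_natl mulrb.
by rewrite -big_mkcond big_pred1_eq.
Qed.

Section Operators.
Variable C : numClosedFieldType.

Lemma adjmxE m n (A : 'M[C]_(m, n)) : adjmx A = A ^t*.
Proof. by apply/matrixP => i j; rewrite !mxE. Qed.

Lemma adjmxK m n (A : 'M[C]_(m, n)) : adjmx (adjmx A) = A.
Proof. by rewrite !adjmxE trmxCK. Qed.

Lemma adjmx_mul m n p (A : 'M[C]_(m, n)) (B : 'M[C]_(n, p)) :
  adjmx (A *m B) = adjmx B *m adjmx A.
Proof. by rewrite !adjmxE trmx_mul map_mxM. Qed.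

Lemma adjmxD m n (A B : 'M[C]_(m, n)) : adjmx (A + B) = adjmx A + adjmx B.
Proof. by apply/matrixP => i j; rewrite !mxE rmorphD. Qed.

Lemma adjmxZ m n a (A : 'M[C]_(m, n)) : adjmx (a *: A) = a^* *: adjmx A.
Proof. by apply/matrixP => i j; rewrite !mxE rmorphM. Qed.

Lemma adjmx_tens m n p q (A : 'M[C]_(m, n)) (B : 'M[C]_(p, q)) :
  adjmx (A *t B) = adjmx A *t adjmx B.
Proof. by apply/matrixP => i j; rewrite !mxE rmorphM. Qed.

Lemma adjmx1 n : adjmx (1%:M : 'M[C]_n) = 1%:M.
Proof. by apply/matrixP => i j; rewrite !mxE rmorph_nat eq_sym. Qed.

Lemma adjmx_tr m n (A : 'M[C]_(m, n)) : adjmx A^T = (adjmx A)^T.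
Proof. by apply/matrixP => i j; rewrite !mxE. Qed.

Lemma castmxD m n m' n' (c : (m = m') * (n = n')) (A B : 'M[C]_(m, n)) :
  castmx c (A + B) = castmx c A + castmx c B.
Proof. by apply/matrixP => i j; rewrite !(castmxE, mxE). Qed.

Lemma castmxZ m n m' n' (c : (m = m') * (n = n')) a (A : 'M[C]_(m, n)) :
  castmx c (a *: A) = a *: castmx c A.
Proof. by apply/matrixP => i j; rewrite !(castmxE, mxE). Qed.

Definition sandwich n p (B : 'M[C]_(n, p)) (X : 'M[C]_n) : 'M[C]_p :=
  adjmx B *m X *m B.

Lemma psd_sandwich n p (B : 'M[C]_(n, p)) (X : 'M[C]_n) :
  psd X -> psd (sandwich B X).
Proof.
move=> [hX pX]; split; first by rewrite !adjmx_mul adjmxK hX mulmxA.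
by move=> v; have := pX (B *m v); rewrite adjmx_mul !mulmxA.
Qed.

Lemma psd_outer n (u : 'cV[C]_n) : psd (u *m adjmx u).
Proof.
split; first by rewrite adjmx_mul adjmxK.
move=> v; have -> : adjmx v *m (u *m adjmx u) *m v
                    = adjmx (adjmx u *m v) *m (adjmx u *m v).
  by rewrite adjmx_mul adjmxK !mulmxA.
by rewrite mxE big_ord1 mxE mulrC mul_conjC_ge0.
Qed.

Lemma psdZ n a (X : 'M[C]_n) : 0 <= a -> psd X -> psd (a *: X).
Proof.
move=> a_ge0 [hX pX]; split; first by rewrite adjmxZ geC0_conj // hX.
by move=> v; rewrite -scalemxAr -scalemxAl mxE mulr_ge0.
Qed.

Lemma psd_sum n N (c : 'I_N -> C) (X : 'I_N -> 'M[C]_n) :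
  (forall l, 0 <= c l) -> (forall l, psd (X l)) -> psd (\sum_l c l *: X l).
Proof.
move=> c_ge0 X_psd; apply: (big_ind (fun M => psd M)).
- split=> [|v]; first by apply/matrixP => i j; rewrite !mxE rmorph0.
  by rewrite mulmx0 mul0mx mxE.
- move=> M M' [hM pM] [hM' pM']; split; first by rewrite adjmxD hM hM'.
  by move=> v; rewrite mulmxDr mulmxDl mxE addr_ge0.
- by move=> l _; apply: psdZ.
Qed.

Lemma adjmx_delta m n (i : 'I_m) (j : 'I_n) :
  adjmx (delta_mx i j : 'M[C]_(m, n)) = delta_mx j i.
Proof. by apply/matrixP => a b; rewrite !mxE rmorph_nat andbC. Qed.

Lemma psd_mxtrace_ge0 n (X : 'M[C]_n) : psd X -> 0 <= \tr X.
Proof.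
move=> [_ pX]; apply: sumr_ge0 => i _.
by have := pX (delta_mx i 0); rewrite adjmx_delta -rowE -colE !mxE.
Qed.

Lemma density_trmx n (s : 'M[C]_n) : density s -> density s^T.
Proof.
move=> [[s_herm s_psd] tr_s]; split; last by rewrite mxtrace_tr.
split=> [|v]; first by rewrite adjmx_tr s_herm.
have := s_psd (adjmx v)^T; rewrite -adjmx_tr adjmxK.
have -> : (adjmx v *m s^T *m v) 0 0 = (adjmx v *m s^T *m v)^T 0 0.
  by rewrite [RHS]mxE.
by rewrite !trmx_mul trmxK mulmxA adjmx_tr.
Qed.

Lemma density_pos n (s : 'M[C]_n) : density s -> (0 < n)%N.
Proof.
case: n s => [|n] s [_] //; rewrite /mxtrace big_ord0 => /eqP.
by rewrite eq_sym oner_eq0.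
Qed.

Lemma density_castmx n p (e : n = p) (X : 'M[C]_n) :
  density X -> density (castmx (e, e) X).
Proof. by case: p / e; rewrite castmx_id. Qed.

End Operators.

Section Channels.
Variable C : numClosedFieldType.

Lemma eq_idtens k n m (f g : 'M[C]_n -> 'M[C]_m) (Z : 'M[C]_(k * n)) :
  f =1 g -> idtens f Z = idtens g Z.
Proof. by move=> fg; apply/matrixP => i j; rewrite !mxE fg. Qed.

Lemma idtens_sum k n m N (c : 'I_N -> C) (f : 'I_N -> 'M[C]_n -> 'M[C]_m)
    (Z : 'M[C]_(k * n)) :
  idtens (fun X => \sum_l c l *: f l X) Z = \sum_l c l *: idtens (f l) Z.
Proof.
apply/matrixP => i j; rewrite !mxE !summxE; apply: eq_bigr => l _.
by rewrite !mxE.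
Qed.

Lemma idtens_sandwich k n p (B : 'M[C]_(n, p)) (Z : 'M[C]_(k * n)) :
  idtens (sandwich B) Z = sandwich ((1%:M : 'M_k) *t B) Z.
Proof.
apply/matrixP => x y.
case: (mxtens_indexP x) => i a; case: (mxtens_indexP y) => j b.
rewrite mxE !mxtens_indexK /= /sandwich adjmx_tens adjmx1 [RHS]mxE big_mxtens.
under [RHS]eq_bigr => j' _ do under eq_bigr => c _ do
  rewrite tensmxE [1%:M _ _]mxE mulrCA.
under [RHS]eq_bigr => j' _ do rewrite -mulr_sumr.
rewrite sumr_delta [LHS]mxE; apply: eq_bigr => c _; congr (_ * _).
rewrite !mxE big_mxtens.
under [RHS]eq_bigr => i' _ do under eq_bigr => d _ do
  rewrite tensmxE [1%:M _ _]mxE eq_sym -mulrA.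
under [RHS]eq_bigr => i' _ do rewrite -mulr_sumr.
by rewrite sumr_delta; apply: eq_bigr => d _; congr (_ * _); rewrite mxE.
Qed.

Lemma sandwich_cp n p (B : 'M[C]_(n, p)) : completely_positive (sandwich B).
Proof. by move=> k Z Z_psd; rewrite idtens_sandwich; apply: psd_sandwich. Qed.

Lemma mxtrace_sandwich n p (B : 'M[C]_(n, p)) (X : 'M[C]_n) :
  \tr (sandwich B X) = \tr (X *m (B *m adjmx B)).
Proof. by rewrite /sandwich -mulmxA mxtrace_mulC mulmxA. Qed.

Lemma weighted_sandwiches_cp_tni n p N (f : 'M[C]_n -> 'M[C]_p)
    (d : 'I_N -> C) (B : 'I_N -> 'M[C]_(n, p)) :
  is_linear f -> (forall X, f X = \sum_l d l *: sandwich (B l) X) ->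
  (forall l, 0 <= d l <= 1) -> \sum_l B l *m adjmx (B l) = 1%:M ->
  cp_tni f.
Proof.
move=> f_lin fE d01 B_complete; split=> // [k Z Z_psd | X X_psd].
  rewrite (eq_idtens _ fE) idtens_sum.
  by apply: psd_sum => l; [case/andP: (d01 l) | apply: sandwich_cp].
rewrite fE raddf_sum /=.
apply: (@le_trans _ _ (\sum_l \tr (sandwich (B l) X))).
  apply: ler_sum => l _; rewrite mxtraceZ; have /andP[d0 d1] := d01 l.
  by apply: ler_piMl => //; apply/psd_mxtrace_ge0/psd_sandwich.
under eq_bigr => l _ do rewrite mxtrace_sandwich.
by rewrite -raddf_sum -mulmx_sumr B_complete mulmx1.
Qed.

Lemma hermitian_spectral n (s : 'M[C]_n) : adjmx s = s ->
  s = adjmx (spectralmx s) *m diag_mx (spectral_diag s) *m spectralmx s.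
Proof.
move=> s_herm; have /orthomx_spectralP {1}-> : s \is normalmx.
  by apply/normalmxP; rewrite -adjmxE s_herm.
by rewrite invmx_unitary ?spectral_unitarymx // adjmxE.
Qed.

Definition trace_pairing n (s X : 'M[C]_n) : 'M[C]_1 := (\tr (s *m X))%:M.

Lemma trace_pairing_linear n (s : 'M[C]_n) : is_linear (trace_pairing s).
Proof.
move=> a X Y; rewrite /trace_pairing mulmxDr -scalemxAr mxtraceD mxtraceZ.
by rewrite raddfD scale_scalar_mx.
Qed.

Lemma trace_pairingDZl n a (s t X : 'M[C]_n) :
  trace_pairing (a *: s + t) X = a *: trace_pairing s X + trace_pairing t X.
Proof.
rewrite /trace_pairing mulmxDl -scalemxAl mxtraceD mxtraceZ.
by rewrite raddfD scale_scalar_mx.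
Qed.

Lemma trace_pairing_cp_tni n (s : 'M[C]_n) :
  density s -> cp_tni (trace_pairing s).
Proof.
move=> [[s_herm s_psd] tr_s].
set P := spectralmx s; set d := spectral_diag s.
have PPt : P *m adjmx P = 1%:M.
  by rewrite adjmxE; apply/unitarymxP/spectral_unitarymx.
have PtP : adjmx P *m P = 1%:M by apply: mulmx1C.
have sE : s = adjmx P *m diag_mx d *m P := hermitian_spectral s_herm.
have dE : diag_mx d = sandwich (adjmx P) s.
  by rewrite /sandwich adjmxK sE !mulmxA PPt mul1mx -mulmxA PPt mulmx1.
pose B l := adjmx (row l P).
have sandwichE X l : sandwich (B l) X = (sandwich (adjmx P) X l l)%:M.
  rewrite [LHS]mx11_scalar /sandwich /B !adjmxK -row_mul; congr _%:M.
  by rewrite !mxE; apply: eq_bigr => c _; rewrite !mxE.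
apply: (weighted_sandwiches_cp_tni (d := fun l => d 0 l) (B := B)
         (trace_pairing_linear s)).
- move=> X; under eq_bigr => l _ do rewrite sandwichE scale_scalar_mx.
  rewrite -raddf_sum /trace_pairing; congr _%:M.
  rewrite sE -!mulmxA mxtrace_mulC -!mulmxA mul_diag_mx /mxtrace.
  by apply: eq_bigr => l _; rewrite /sandwich adjmxK mxE -mulmxA.
- have d_ge0 l : 0 <= d 0 l.
    have := s_psd (B l); rewrite -/(sandwich (B l) s) sandwichE -dE.
    by rewrite !mxE !eqxx !mulr1n.
  have d_sum : \sum_l d 0 l = 1.
    by rewrite -mxtrace_diag dE mxtrace_sandwich adjmxK PtP mulmx1.
  move=> l; rewrite d_ge0 -d_sum (bigD1 l) //= lerDl.
  by apply: sumr_ge0 => i _.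
- rewrite -PtP; apply/matrixP => i j; rewrite summxE mxE.
  by apply: eq_bigr => l _; rewrite !mxE big_ord1 !mxE conjCK.
Qed.

Definition max_entangled_vec n : 'cV[C]_(n * n) :=
  \col_x ((mxtens_unindex x).1 == (mxtens_unindex x).2)%:R.

Definition max_entangled n : 'M[C]_(n * n) :=
  n%:R^-1 *: (max_entangled_vec n *m adjmx (max_entangled_vec n)).

Lemma max_entangledE n i a j b :
  max_entangled n (mxtens_index (i, a)) (mxtens_index (j, b))
  = n%:R^-1 * ((a == i)%:R * (b == j)%:R).
Proof.
by rewrite !mxE big_ord1 !mxE !mxtens_indexK rmorph_nat (eq_sym a) (eq_sym b).
Qed.

Lemma max_entangled_density n : (0 < n)%N -> density (max_entangled n).
Proof.
move=> n_gt0; split.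
  by apply: psdZ; [rewrite invr_ge0 ler0n | apply: psd_outer].
rewrite /mxtrace big_mxtens.
under eq_bigr => i _ do under eq_bigr => a _ do rewrite max_entangledE mulrCA.
under eq_bigr => i _ do rewrite sumr_delta eqxx mulr1.
by rewrite sumr_const card_ord -[_ *+ n]mulr_natr mulVf // pnatr_eq0 -lt0n.
Qed.

Lemma idtens_trace_pairing_max_entangled n (s : 'M[C]_n) :
  idtens (trace_pairing s^T) (max_entangled n) = n%:R^-1 *: to_triv s.
Proof.
apply/matrixP => x y.
case: (mxtens_indexP x) => i o; case: (mxtens_indexP y) => j o'.
rewrite [LHS]mxE !mxtens_indexK /= (ord1 o) (ord1 o') mxE eqxx mulr1n /mxtrace.
under eq_bigr => a _ do (rewrite mxE; under eq_bigr => b _ do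
  rewrite [s^T _ _]mxE [X in _ * X]mxE max_entangledE mulrCA (mulrCA (s b a))).
under eq_bigr => a _ do rewrite -mulr_sumr sumr_delta [s i a * _]mulrC.
rewrite -mulr_sumr sumr_delta mxE castmxE; congr (_ * s _ _);
  by apply: val_inj; rewrite /= muln1 addn0.
Qed.

Lemma idtens_trace_pairing_linear k n (Y : 'M[C]_(k * n)) :
  is_linear (fun s : 'M[C]_n => idtens (trace_pairing s) Y).
Proof.
by move=> a s t; apply/matrixP => i j; rewrite [LHS]mxE trace_pairingDZl !mxE.
Qed.

End Channels.

Theorem proposition1 (R : realType) (star : star_type R[i]) :
  state_over_time_function star -> axiom_E star -> state_linear star.
Proof.
move=> _ [ext ext_spec] n m E E_channel.
have [ext_triv ext_scale ext_comm _] := ext_spec n m E E_channel.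
pose Y := ext n m n E (max_entangled _ n).
pose e := muln1 (n * m).
exists (fun s => n%:R *: castmx (e, e) (idtens (trace_pairing s^T) Y)); split.
  move=> a s t /=.
  rewrite linearD linearZ /= idtens_trace_pairing_linear castmxD castmxZ.
  by rewrite scalerDr !scalerA (mulrC a).
move=> s s_density; have n_gt0 := density_pos s_density.
rewrite /Y ext_comm; last first.
- exact/trace_pairing_cp_tni/density_trmx.
- by left; apply: max_entangled_density.
rewrite idtens_trace_pairing_max_entangled ext_scale; last first.
  by left; apply: density_castmx.
rewrite ext_triv // castmxZ castmxKV scalerA mulfV ?scale1r //.
by rewrite pnatr_eq0 -lt0n.
Qed.
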